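(* In the four-price Devil's Menu described in the context (with $2\varepsilon<\delta\le V-\varepsilon$), let $$\bar B=\max_{S \subseteq \{1,\ldots,\bar{k}\},\ |S|=q} \left[ (V+\varepsilon) \sum_{k\in S} n^R_k+ \delta \sum_{k\in S} n^D_k + 2\varepsilon \sum_{k\notin S}n^D_k \right].$$ Starting from the profile in which every real voter applies for $s_1$ and every decoy voter applies for $s_2$, suppose exactly one decoy voter deviates and applies for $s_1$. Then, for every realization of the random selection, the adversary's total expenditure is at most $\bar B$.
   Context: There is a finite set $N$ of citizens partitioned into $\bar k>1$ districts $N_1,\dots,N_{\bar k}$; district $N_k$ contains $n_k^R\ge1$ real voters and $n_k^D$ decoy voters, $n_k=n_k^R+n_k^D>1$. Real voters value their ballot at $V>0$, decoy voters at $0$. Fix $1\le q\le\bar k-1$ and $\varepsilon>0$. Each citizen applies for slot $s_1$ or $s_2$. For district $k$ let $m_k$ be the number of $s_1$-applicants and $\rho_k=m_k/n_k^R$; let $\rho$ be the $q$-th smallest of $\rho_1,\dots,\rho_{\bar k}$, $C=\{k:\rho_k<\rho\}$, $T=\{k:\rho_k=\rho\}$, $c=|C|$, $t=|T|$. Districts in $C$ are selected and $q-c$ districts of $T$ are selected uniformly at random; the rest are non-selected. Prices offered: $s_1$ in a selected district $V+\varepsilon$; $s_2$ in a selected district $\delta$; $s_1$ in a non-selected district $\varepsilon$; $s_2$ in a non-selected district $2\varepsilon$. Each applicant sells his ballot iff the price strictly exceeds his valuation, and the adversary must pay the price for every ballot sold; the adversary's expenditure is the sum of these payments. *)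

From mathcomp Require Import all_boot all_order all_algebra.
Set Implicit Arguments. Unset Strict Implicit. Unset Printing Implicit Defensive.
Import Order.TTheory GRing.Theory Num.Theory.
Local Open Scope ring_scope.

(* A profile [sigma : N -> bool] gives the slot applied for:
   true = s1, false = s2. *)
Section DevilsMenu.
Variables (R : realFieldType) (N : finType) (K : nat)
  (dist : N -> 'I_K) (real : pred N).

Definition nR (k : 'I_K) : nat := #|[set i | (dist i == k) && real i]|.
Definition nD (k : 'I_K) : nat := #|[set i | (dist i == k) && ~~ real i]|.

Definition m1 (sigma : N -> bool) (k : 'I_K) : nat :=
  #|[set i | (dist i == k) && sigma i]|.

Definition rho (sigma : N -> bool) (k : 'I_K) : R :=
  (m1 sigma k)%:R / (nR k)%:R.

Definition rho_q (sigma : N -> bool) (q : nat) : R :=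
  nth 0 (sort <=%R [seq rho sigma k | k <- enum 'I_K]) q.-1.

Definition Cset (sigma : N -> bool) (q : nat) : {set 'I_K} :=
  [set k | rho sigma k < rho_q sigma q].
Definition Tset (sigma : N -> bool) (q : nat) : {set 'I_K} :=
  [set k | rho sigma k == rho_q sigma q].

(* S is a possible realization of the selected set: all of C plus
   q - c districts of T. *)
Definition realization (sigma : N -> bool) (q : nat) (S : {set 'I_K}) : bool :=
  [&& Cset sigma q \subset S,
      S \subset Cset sigma q :|: Tset sigma q & #|S| == q].

(* price offered: selected?, slot (true = s1) *)
Definition price (V eps delta : R) (selected slot : bool) : R :=
  if selected then (if slot then V + eps else delta)
  else (if slot then eps else 2 * eps).

Definition valuation (V : R) (i : N) : R := if real i then V else 0.

Definition expenditure (V eps delta : R) (sigma : N -> bool)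
    (S : {set 'I_K}) : R :=
  \sum_(i : N | valuation V i < price V eps delta (dist i \in S) (sigma i))
     price V eps delta (dist i \in S) (sigma i).

(* \bar B; all terms are nonnegative, so 0 is a harmless neutral element *)
Definition Bbar (V eps delta : R) (q : nat) : R :=
  \big[Num.max/0]_(S : {set 'I_K} | #|S| == q)
    ((V + eps) * (\sum_(k in S) (nR k)%:R)
     + delta * (\sum_(k in S) (nD k)%:R)
     + 2 * eps * (\sum_(k in ~: S) (nD k)%:R)).

End DevilsMenu.

From mathcomp Require Import all_boot all_order all_algebra.
From mathcomp Require Import zify lra.
Set Implicit Arguments. Unset Strict Implicit. Unset Printing Implicit Defensive.
Import Order.TTheory GRing.Theory Num.Theory.
Local Open Scope ring_scope.

(* The deviating decoy raises the application ratio of his district above 1,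
   while every other district has ratio exactly 1.  His district is therefore
   the unique maximiser of the ratio, and since only q < K districts are
   selected it is never selected.  Each citizen then costs the adversary at
   most what he would cost in the truthful profile under the same selection
   (the deviator is paid eps instead of 2 eps), and the truthful cost of a
   q-element selection is one of the terms whose maximum is Bbar. *)

Lemma sum_card_fiber (R : pzSemiRingType) (N I : finType) (f : N -> I)
    (P : pred N) (A : {set I}) :
  \sum_(k in A) (#|[set i | (f i == k) && P i]|)%:R
    = \sum_(i | (f i \in A) && P i) (1 : R).
Proof.
rewrite (partition_big f (mem A)) /=; last by move=> i /andP[].
apply: eq_bigr => k kA; rewrite -sum1_card natr_sum.
apply: eq_big => // i; rewrite inE.
by case: (eqVneq (f i) k) => [->|_]; rewrite ?kA ?andbT ?andbF.
Qed.

Section DeviationBound.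

Variables (R : realFieldType) (N : finType) (K : nat).
Variables (dist : N -> 'I_K) (real : pred N).

Lemma realization_excludes_strict_max (sigma : N -> bool) (q : nat)
    (S : {set 'I_K}) (k : 'I_K) :
  (q < K)%N ->
  (forall j, j != k -> rho R dist real sigma j < rho R dist real sigma k) ->
  realization R dist real sigma q S -> k \notin S.
Proof.
move=> qK rho_max /and3P[CS ST /eqP cardS]; apply/negP => kS.
have rho_k_le : rho R dist real sigma k <= rho_q R dist real sigma q.
  by move: (subsetP ST k kS); rewrite !inE => /orP[/ltW|/eqP ->].
suff S_full : S = setT by move: qK; rewrite -cardS S_full cardsT card_ord ltnn.
apply/setP => j; rewrite inE; have [->//|jk] := eqVneq j k.
by apply: (subsetP CS); rewrite inE (lt_le_trans (rho_max j jk)).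
Qed.

Variables (V eps delta : R).

Definition truthful_cost (S : {set 'I_K}) (i : N) : R :=
  if dist i \in S then (if real i then V + eps else delta)
  else (if real i then 0 else 2 * eps).

Lemma Bbar_termE (S : {set 'I_K}) :
  (V + eps) * (\sum_(k in S) (nR dist real k)%:R)
  + delta * (\sum_(k in S) (nD dist real k)%:R)
  + 2 * eps * (\sum_(k in ~: S) (nD dist real k)%:R)
  = \sum_i truthful_cost S i.
Proof.
rewrite /nR /nD !sum_card_fiber !mulr_sumr.
rewrite (big_mkcond (fun i => (dist i \in S) && real i)).
rewrite (big_mkcond (fun i => (dist i \in S) && ~~ real i)).
rewrite (big_mkcond (fun i => (dist i \in ~: S) && ~~ real i)) -!big_split /=.
apply: eq_bigr => i _; rewrite /truthful_cost inE !mulr1.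
by case: (dist i \in S); case: (real i); rewrite /= ?addr0 ?add0r.
Qed.

Lemma truthful_cost_le_Bbar (q : nat) (S : {set 'I_K}) :
  #|S| = q -> \sum_i truthful_cost S i <= Bbar dist real V eps delta q.
Proof.
move=> cardS; rewrite -Bbar_termE.
by apply: (le_bigmax_cond _ (fun S0 : {set 'I_K} => _)); rewrite cardS.
Qed.

Section OneDecoyDeviates.

Variable d : N.
Hypothesis decoy_d : ~~ real d.

Let sigma (i : N) : bool := real i || (i == d).

Lemma m1_deviation_other (k : 'I_K) :
  k != dist d -> m1 dist sigma k = nR dist real k.
Proof.
move=> kd; apply: eq_card => i; rewrite !inE /sigma.
have [->|] := eqVneq i d; last by rewrite orbF.
by rewrite eq_sym (negbTE kd).
Qed.

Lemma m1_deviation_self : m1 dist sigma (dist d) = (nR dist real (dist d)).+1.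
Proof.
rewrite /m1 /nR; have -> : [set i | (dist i == dist d) && sigma i]
    = d |: [set i | (dist i == dist d) && real i].
  apply/setP => i; rewrite !inE /sigma.
  by have [->|_] := eqVneq i d; rewrite ?eqxx ?orbT ?orbF.
by rewrite cardsU1 inE (negbTE decoy_d) andbF.
Qed.

Lemma rho_deviation_strict_max :
  (forall j : 'I_K, (1 <= nR dist real j)%N) ->
  forall k : 'I_K, k != dist d ->
  rho R dist real sigma k < rho R dist real sigma (dist d).
Proof.
move=> nR_pos k kd; rewrite /rho m1_deviation_other // m1_deviation_self.
have nRk_gt0 : (0 : R) < (nR dist real k)%:R by rewrite ltr0n nR_pos.
have nRd_gt0 : (0 : R) < (nR dist real (dist d))%:R by rewrite ltr0n nR_pos.
by rewrite divff ?gt_eqF // ltr_pdivlMr // mul1r ltr_nat.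
Qed.

Lemma payment_deviation_le_truthful_cost (S : {set 'I_K}) (i : N) :
  0 < eps -> 2 * eps < delta -> delta <= V - eps -> dist d \notin S ->
  (if valuation real V i < price V eps delta (dist i \in S) (sigma i)
   then price V eps delta (dist i \in S) (sigma i) else 0)
  <= truthful_cost S i.
Proof.
move=> eps_gt0 eps_delta delta_V dS.
have eps_V : eps < V by lra.
rewrite /valuation /price /sigma /truthful_cost.
have [->|_] := eqVneq i d.
  by rewrite (negbTE dS) (negbTE decoy_d) orbT eps_gt0; lra.
rewrite orbF; case: (real i); case: (dist i \in S) => /=.
- by rewrite ltrDl eps_gt0.
- by rewrite ltNge (ltW eps_V).
- by rewrite (lt_trans _ eps_delta) ?mulr_gt0.
- by rewrite mulr_gt0.
Qed.

End OneDecoyDeviates.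

End DeviationBound.

Theorem corollary1 (R : realFieldType) (N : finType) (K : nat)
    (dist : N -> 'I_K) (real : pred N) (V eps delta : R) (q : nat) (d : N) :
  (1 < K)%N ->
  (forall k : 'I_K, (1 <= nR dist real k)%N) ->
  (forall k : 'I_K, (1 < #|[set i | dist i == k]|)%N) ->
  0 < V -> 0 < eps -> 2 * eps < delta -> delta <= V - eps ->
  (1 <= q)%N -> (q <= K - 1)%N ->
  ~~ real d ->
  let sigma := fun i : N => real i || (i == d) in
  forall S : {set 'I_K},
    @realization R N K dist real sigma q S ->
    @expenditure R N K dist real V eps delta sigma S <= @Bbar R N K dist real V eps delta q.
Proof.
move=> K_gt1 nR_pos _ _ eps_gt0 eps_delta delta_V _ qK decoy_d sigma S realS.
have dS : dist d \notin S.
  apply: (realization_excludes_strict_max _ _ realS); first by lia.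
  exact: rho_deviation_strict_max decoy_d nR_pos.
have /and3P[_ _ /eqP cardS] := realS.
apply: le_trans (truthful_cost_le_Bbar dist real V eps delta cardS).
rewrite /expenditure big_mkcond /=; apply: ler_sum => i _.
exact: payment_deviation_le_truthful_cost.
Qed.
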